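(* In the setting and notation described in the context, suppose that $\Delta_{2,n},\Delta_{p_0+1,n},\Delta_{p_0+M-1,n},\Delta_{p_0,n}$ are each $O(n^{-\gamma_0})$, $\eta_n=O(n^{-\gamma_1})$, $V_{1n}=O(n^{\gamma_2})$, $V_{2n}=O(n^{\gamma_3})$, $C_{1n}=O(n^{\gamma_4})$, $C_{2n}=O(n^{\gamma_5})$, $C_{3n}=O(n^{\gamma_6})$, $C_{4n}=O(n^{\gamma_7})$, $p_0=O(n^{\gamma_8})$, $M=O(n^{\gamma_9})$, where $\gamma_1,\gamma_8,\gamma_9>0$, $\gamma_8<\gamma_9$, $3\gamma_9<\gamma_0$, $\gamma_9<2\gamma_1$, $\gamma_7<\gamma_1$, $\gamma_6<\gamma_1$, $\gamma_2<\gamma_0$, $\gamma_3<\gamma_0$, $3\gamma_9+\gamma_4<\gamma_0$, $3\gamma_9<\gamma_1$, $6\gamma_9+\gamma_5<\gamma_0$, $3\gamma_8+\gamma_4+\gamma_6<\gamma_0$, $3\gamma_8+\gamma_6<\gamma_1$, $6\gamma_8+\gamma_5+\gamma_6<\gamma_0$, $3\gamma_9+\gamma_4+\gamma_7<\gamma_0$, $3\gamma_9+\gamma_7<\gamma_1$, $6\gamma_9+\gamma_5+\gamma_7<\gamma_0$. Then there exist constants $\alpha\in(0,1)$ and $D>0$ such that, for all sufficiently large $n$, (i) $3(M+1)^2(9M+1)\Delta_{2,n}<\alpha$, and (ii) $12\tau^2-12(M-p_0+1)\eta_n^2-4\eta_n^2-4\eta_n(C_{4n}+C_{3n})-\Delta_{p_0,n}V_{1n}-\Delta_{p_0+M-1,n}V_{2n}-\rho_{1n}-\rho_{2n}>D$,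 where $\rho_{1n},\rho_{2n}$ are computed with this $\alpha$.
   Context: Setting. $n=1,2,\ldots$ indexes a sequence of problems. For each $n$ we are given integers $p=p_n$, $p_0=p_{0,n}$, $M=M_n$ with $1\le p_0\le M$ and $p_0<p$; a continuous function $f_n:[0,1]^p\to\mathbb{R}$; design points $\mathbf{x}_i=(x_{i1},\ldots,x_{ip})'\in[0,1)^p$, $i=1,\ldots,n$; a function $\widetilde f_n\in C[0,1]^{p_0}$; a number $\eta_n>0$; and a positive constant $\tau$. Let $\mathbf{X}$ be the $n\times p$ matrix with rows $\mathbf{x}_i'$. Let $Z_d=\{1,\ldots,d\}$, $\mathcal{A}_0=Z_{p_0}$. For $\mathcal{A}\subset Z_p$, $\mathbf{x}_{\mathcal{A}}$ is the subvector of $\mathbf{x}\in[0,1]^p$ with coordinates in $\mathcal{A}$ and $\mathbf{X}_{\mathcal{A}}$ the submatrix of $\mathbf{X}$ with columns in $\mathcal{A}$. $a_n=O(n^{\gamma})$ means $|a_n|\le cn^{\gamma}$ for some constant $c$ and all large $n$. Subset best linear approximation: for $\mathcal{A}\subset Z_p$, $(\beta_0(\mathcal{A}),\boldsymbol{\beta}(\mathcal{A})')'\in\mathbb{R}\times\mathbb{R}^{|\mathcal{A}|}$ minimizes $\int_{[0,1]^p}[f_n(\mathbf{x})-\phi_0-\boldsymbol{\phi}'\mathbf{x}_{\mathcal{A}}]^2d\mathbf{x}$ over $(\phi_0,\boldsymbol\phi)$; $\boldsymbol{\beta}_{Z_p}(\mathcal{A})\in\mathbb{R}^p$ has coordinates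 indexed by $\mathcal{A}$ equal to $\boldsymbol\beta(\mathcal{A})$ and all others $0$. Hardy–Krause variation: for $g:[0,1]^d\to\mathbb{R}$ and an axis-parallel rectangle $J$, $\Delta_J(g)$ is the sum of values of $g$ at the $2^d$ vertices of $J$ with alternating signs at nearest-neighbour vertices; $V^{Vit}(g)=\sup_\Pi\sum_{J\in\Pi}|\Delta_J(g)|$ over partitions $\Pi$ of $[0,1]^d$ into finitely many non-overlapping axis-parallel sub-rectangles; $V_{HK}(g)=\sum_{\emptyset\ne u\subset Z_d}V^{Vit}(g_u)$ where $g_u$ is $g$ with $x_k=1$ for $k\notin u$, as a function of $\mathbf{x}_u$. Functions depending on some coordinates of $\mathbf{x}\in[0,1]^p$ are regarded as functions on $[0,1]^p$. Discrepancy: for an $m\times d$ matrix $\mathbf{A}$ with rows $\mathbf{a}_i'\in[0,1]^d$, $\delta_{d,m}(\mathbf{A})=\sup_{\mathbf{x}\in[0,1]^d}|F_m(\mathbf{x})-\prod_{k=1}^dx_k|$, $F_m(\mathbf{x})=\frac1m\#\{i:a_{ik}\le x_k\ \forall k\}$. Sets: $\mathcal{U}_1=\{\mathcal{A}\subset Z_p:|\mathcal{A}|=M,\mathcal{A}_0\setminus\mathcal{A}\neq\emptyset\}$; $\mathcal{U}_2=\{\mathcal{A}\subset Z_p:|\mathcal{A}|=2\}$; $\mathcal{U}_3=\{\mathcal{A}_0\cup I_1:I_1\subset Z_p\setminus\mathcal{A}_0,|I_1|=1\}$; $\mathcal{U}_4=\{\mathcal{A}_0\cup I_2:I_2\subset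 Z_p\setminus\mathcal{A}_0,|I_2|=M-1\}$. $\Delta_{p_0,n}=\delta_{p_0,n}(\mathbf{X}_{\mathcal{A}_0})$, $\Delta_{2,n}=\max_{\mathcal{A}\in\mathcal{U}_2}\delta_{2,n}(\mathbf{X}_{\mathcal{A}})$, $\Delta_{p_0+1,n}=\max_{\mathcal{A}\in\mathcal{U}_3}\delta_{p_0+1,n}(\mathbf{X}_{\mathcal{A}})$, $\Delta_{p_0+M-1,n}=\max_{\mathcal{A}\in\mathcal{U}_4}\delta_{p_0+M-1,n}(\mathbf{X}_{\mathcal{A}})$. Constants: $C_{1n}=\max_{j=1,\ldots,p}\max(V_{HK}(\widetilde f_n),V_{HK}(x_j\widetilde f_n))$; $C_{2n}=\max_{\mathbf{x}\in[0,1]^p}|f_n(\mathbf{x})|$; $C_{3n}=\max_{\mathbf{x}\in[0,1]^p}|\widetilde f_n(\mathbf{x}_{\mathcal{A}_0})-\mathbf{x}'\boldsymbol\beta_{Z_p}(\mathcal{A}_0)-\beta_0(\mathcal{A}_0)|$; $C_{4n}=\max_{\mathcal{A}\in\mathcal{U}_1}\max_{\mathbf{x}\in[0,1]^p}|\widetilde f_n(\mathbf{x}_{\mathcal{A}_0})-\mathbf{x}'\boldsymbol\beta_{Z_p}(\mathcal{A})-\beta_0(\mathcal{A})|$; $V_{1n}=V_{HK}(\widetilde f_n(\mathbf{x}_{\mathcal{A}_0})-\beta_0(\mathcal{A}_0)-\mathbf{x}'\boldsymbol\beta_{Z_p}(\mathcal{A}_0))$; $V_{2n}=\max_{\mathcal{A}\in\mathcal{U}_1}V_{HK}(\widetilde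 f_n(\mathbf{x}_{\mathcal{A}_0})-\beta_0(\mathcal{A})-\mathbf{x}'\boldsymbol\beta_{Z_p}(\mathcal{A}))$. For $\alpha\in(0,1)$: $\zeta_{1n}=C_{1n}(p_0+1)^2(9p_0+1)\Delta_{p_0,n}+2(p_0+1)^2(9p_0+1)\eta_n+\frac{3}{1-\alpha}C_{2n}(p_0+1)^4(9p_0+1)^2\Delta_{2,n}$; $\zeta_{2n}=C_{1n}(M+1)^2(9M+1)\Delta_{p_0+1,n}+2(M+1)^2(9M+1)\eta_n+\frac{3}{1-\alpha}C_{2n}(M+1)^4(9M+1)^2\Delta_{2,n}$; $\rho_{1n}=\zeta_{1n}^2+2(C_{3n}+\eta_n)\zeta_{1n}+2(p_0+1)^{-1/2}\zeta_{1n}^2$; $\rho_{2n}=\zeta_{2n}^2+2(C_{4n}+\eta_n)\zeta_{2n}+2(M+1)^{-1/2}\zeta_{2n}^2$. *)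

From Stdlib Require Import Reals ClassicalEpsilon.
From Coquelicot Require Import Coquelicot.
From mathcomp Require Import all_boot.
Set Implicit Arguments. Unset Strict Implicit. Unset Printing Implicit Defensive.
Local Open Scope R_scope.

(** Points of [0,1]^d are functions 'I_d -> R; coordinate k of Z_d = {1..d}
    is the ordinal k-1. *)
Definition in_cube (d : nat) (x : 'I_d -> R) : Prop := forall k, 0 <= x k <= 1.

Definition cont_cube (d : nat) (g : ('I_d -> R) -> R) : Prop :=
  forall x, in_cube x -> forall eps, 0 < eps -> exists delta, 0 < delta /\
    forall y, in_cube y -> (forall k, Rabs (y k - x k) < delta) ->
      Rabs (g y - g x) < eps.

Definition depends_only (d : nat) (A : {set 'I_d}) (g : ('I_d -> R) -> R) : Prop :=
  forall x y, (forall k, k \in A -> x k = y k) -> g x = g y.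

Definition leRb (a b : R) : bool := if Rle_dec a b then true else false.

(** Integral over [0,1]^d (iterated Riemann integral; equals the Lebesgue
    integral for the continuous integrands used below). *)
Definition cons_pt (d : nat) (t : R) (x : 'I_d -> R) : 'I_d.+1 -> R :=
  fun i => match unlift ord0 i with Some j => x j | None => t end.

Fixpoint cube_int (d : nat) : (('I_d -> R) -> R) -> R :=
  match d return (('I_d -> R) -> R) -> R with
  | 0 => fun g => g (fun _ => 0)
  | d'.+1 => fun g => RInt (fun t => cube_int (fun x => g (cons_pt t x))) 0 1
  end.

Definition lin (d : nat) (phi x : 'I_d -> R) : R := \big[Rplus/0]_(k < d) (phi k * x k).

(** Subset best linear approximation.  A coefficient vector is represented
    directly as beta_{Z_p}(A) : 'I_p -> R, vanishing outside A. *)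
Definition blp_loss (p : nat) (f : ('I_p -> R) -> R) (c0 : R) (c : 'I_p -> R) : R :=
  cube_int (fun x => (f x - c0 - lin c x) ^ 2).

Definition supported (p : nat) (A : {set 'I_p}) (c : 'I_p -> R) : Prop :=
  forall k, k \notin A -> c k = 0.

Definition is_blp (p : nat) (f : ('I_p -> R) -> R) (A : {set 'I_p})
  (b : R * ('I_p -> R)) : Prop :=
  supported A b.2 /\
  forall c0 c, supported A c -> blp_loss f b.1 b.2 <= blp_loss f c0 c.

Definition blp (p : nat) (f : ('I_p -> R) -> R) (A : {set 'I_p}) : R * ('I_p -> R) :=
  epsilon (inhabits (0, fun _ => 0)) (is_blp f A).

Definition beta0 p f A : R := (@blp p f A).1.
Definition betaZ p f A : 'I_p -> R := (@blp p f A).2.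

(** For u a set of coordinates, a rectangle of the
    face {x : x_k = 1 for k notin u} is a pair (a,b) with 0<=a_k<=b_k<=1 for
    k in u and a_k=b_k=1 for k notin u; this identifies [0,1]^|u| with that
    face, so that g restricted to it is g_u. *)
Definition face_rect (d : nat) (u : {set 'I_d}) (J : ('I_d -> R) * ('I_d -> R)) : Prop :=
  forall k, (k \in u -> 0 <= J.1 k /\ J.1 k <= J.2 k /\ J.2 k <= 1) /\
            (k \notin u -> J.1 k = 1 /\ J.2 k = 1).

Definition face_partition (d : nat) (u : {set 'I_d})
  (P : seq (('I_d -> R) * ('I_d -> R))) : Prop :=
  (forall J, List.In J P -> face_rect u J) /\
  (forall x : 'I_d -> R, (forall k, k \in u -> 0 <= x k <= 1) ->
     exists J, List.In J P /\ forall k, k \in u -> J.1 k <= x k <= J.2 k) /\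
  (forall i j, (i < size P)%nat -> (j < size P)%nat -> i <> j ->
     ~ exists x : 'I_d -> R, forall k, k \in u ->
        (nth (fun _ => 0, fun _ => 0) P i).1 k < x k < (nth (fun _ => 0, fun _ => 0) P i).2 k /\
        (nth (fun _ => 0, fun _ => 0) P j).1 k < x k < (nth (fun _ => 0, fun _ => 0) P j).2 k).

Definition rect_delta (d : nat) (u : {set 'I_d}) (J : ('I_d -> R) * ('I_d -> R))
  (g : ('I_d -> R) -> R) : R :=
  \big[Rplus/0]_(v in powerset u)
     (pow (-1) #|v| * g (fun k => if k \in v then J.1 k else J.2 k)).

Definition vitali_face (d : nat) (u : {set 'I_d}) (g : ('I_d -> R) -> R) : Rbar :=
  Lub_Rbar (fun r => exists P, face_partition u P /\
     r = \big[Rplus/0]_(J <- P) Rabs (rect_delta u J g)).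

Definition Rbar0 : Rbar := Rbar.Finite 0.
Definition V_HK (d : nat) (g : ('I_d -> R) -> R) : Rbar :=
  \big[Rbar_plus/Rbar0]_(u : {set 'I_d} | u != set0) vitali_face u g.

Definition discrepancy (n p : nat) (X : 'I_n -> 'I_p -> R) (A : {set 'I_p}) : R :=
  real (Lub_Rbar (fun r => exists x : 'I_p -> R, in_cube x /\
     r = Rabs (INR #|[set i : 'I_n | [forall k in A, leRb (X i k) (x k)]]| / INR n
               - \big[Rmult/1]_(k in A) x k))).

Definition Rbar_maxr (x y : Rbar) : Rbar :=
  if Rbar_le_dec x y then y else x.

Definition sup_cube (d : nat) (g : ('I_d -> R) -> R) : R :=
  real (Lub_Rbar (fun r => exists x, @in_cube d x /\ r = g x)).

Definition A0 (p p0 : nat) : {set 'I_p} := [set k : 'I_p | (k < p0)%nat].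

Definition U1 (p p0 M : nat) : pred {set 'I_p} :=
  fun A => (#|A| == M)%nat && ~~ (A0 p p0 \subset A).
Definition U2 (p : nat) : pred {set 'I_p} := fun A => #|A| == 2%nat.
Definition U3 (p p0 : nat) : pred {set 'I_p} :=
  fun A => (A0 p p0 \subset A) && (#|A| == p0.+1)%nat.
Definition U4 (p p0 M : nat) : pred {set 'I_p} :=
  fun A => (A0 p p0 \subset A) && (#|A| == (p0 + M - 1)%nat).

Definition bigO (a : nat -> R) (g : R) : Prop :=
  exists c N, forall n, (N <= n)%nat -> Rabs (a n) <= c * Rpower (INR n) g.
Definition bigO_Rbar (a : nat -> Rbar) (g : R) : Prop :=
  exists c N, forall n, (N <= n)%nat -> Rbar_le (Rbar_abs (a n)) (Rbar.Finite (c * Rpower (INR n) g)).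

Section Quantities.
Variables (n p p0 M : nat) (f ft : ('I_p -> R) -> R) (X : 'I_n -> 'I_p -> R) (eta : R).

Definition Delta_p0 : R := discrepancy X (A0 p p0).
Definition Delta_2 : R := \big[Rmax/0]_(A : {set 'I_p} | U2 A) discrepancy X A.
Definition Delta_p0_1 : R := \big[Rmax/0]_(A : {set 'I_p} | U3 p0 A) discrepancy X A.
Definition Delta_p0_M_1 : R := \big[Rmax/0]_(A : {set 'I_p} | U4 p0 M A) discrepancy X A.

Definition resid (A : {set 'I_p}) : ('I_p -> R) -> R :=
  fun x => ft x - lin (betaZ f A) x - beta0 f A.

Definition C1n : Rbar :=
  \big[Rbar_maxr/Rbar0]_(j : 'I_p)
     Rbar_maxr (V_HK ft) (V_HK (fun x => x j * ft x)).
Definition C2n : R := sup_cube (fun x => Rabs (f x)).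
Definition C3n : R := sup_cube (fun x => Rabs (resid (A0 p p0) x)).
Definition C4n : R :=
  \big[Rmax/0]_(A : {set 'I_p} | U1 p0 M A) sup_cube (fun x => Rabs (resid A x)).
Definition V1n : Rbar := V_HK (resid (A0 p p0)).
Definition V2n : Rbar := \big[Rbar_maxr/Rbar0]_(A : {set 'I_p} | U1 p0 M A) V_HK (resid A).

Variable alpha : R.
Definition zeta1 : R :=
  real C1n * INR (p0 + 1) ^ 2 * INR (9 * p0 + 1) * Delta_p0
  + 2 * INR (p0 + 1) ^ 2 * INR (9 * p0 + 1) * eta
  + 3 / (1 - alpha) * C2n * INR (p0 + 1) ^ 4 * INR (9 * p0 + 1) ^ 2 * Delta_2.
Definition zeta2 : R :=
  real C1n * INR (M + 1) ^ 2 * INR (9 * M + 1) * Delta_p0_1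
  + 2 * INR (M + 1) ^ 2 * INR (9 * M + 1) * eta
  + 3 / (1 - alpha) * C2n * INR (M + 1) ^ 4 * INR (9 * M + 1) ^ 2 * Delta_2.
Definition rho1 : R :=
  zeta1 ^ 2 + 2 * (C3n + eta) * zeta1 + 2 / sqrt (INR (p0 + 1)) * zeta1 ^ 2.
Definition rho2 : R :=
  zeta2 ^ 2 + 2 * (C4n + eta) * zeta2 + 2 / sqrt (INR (M + 1)) * zeta2 ^ 2.
End Quantities.

(** With α = 1/2 and D = 6τ², every term of (i), and every term of (ii) other
    than 12τ², is a finite product of sequences of known polynomial growth;
    the hypotheses on γ0, ..., γ9 say precisely that the exponents of each
    product add up to a negative number, so each term tends to 0. *)
From Stdlib Require Import Reals Lra Lia.
From Coquelicot Require Import Coquelicot.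
From mathcomp Require Import all_boot zify.
Local Open Scope R_scope.

Lemma bigO_mul (a b : nat -> R) (g h : R) :
  bigO a g -> bigO b h -> bigO (fun n => a n * b n) (g + h).
Proof.
move=> [c1 [N1 H1]] [c2 [N2 H2]]; exists (c1 * c2), (maxn N1 N2) => n Hn.
rewrite Rabs_mult Rpower_plus.
have Ha := H1 n ltac:(lia); have Hb := H2 n ltac:(lia).
replace (c1 * c2 * (Rpower (INR n) g * Rpower (INR n) h))
  with ((c1 * Rpower (INR n) g) * (c2 * Rpower (INR n) h)) by ring.
by apply: Rmult_le_compat; auto using Rabs_pos.
Qed.

Lemma bigO_cst (k : R) : bigO (fun _ => k) 0.
Proof.
exists (Rabs k), 0%nat => n _.
by rewrite /Rpower Rmult_0_l exp_0 Rmult_1_r; apply: Rle_refl.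
Qed.

Lemma bigO_pow (a : nat -> R) (g : R) (k : nat) :
  bigO a g -> bigO (fun n => a n ^ k) (INR k * g).
Proof.
move=> Ha; elim: k => [|k IHk].
  by rewrite Rmult_0_l; apply: bigO_cst.
by rewrite S_INR Rmult_plus_distr_r Rmult_1_l Rplus_comm; apply: bigO_mul.
Qed.

Lemma bigO_INR_le (k m : nat -> nat) (c : nat) (g : R) :
  bigO (fun n => INR (m n)) g -> (forall n, k n <= c * m n)%nat ->
  bigO (fun n => INR (k n)) g.
Proof.
move=> [c0 [N H]] Hkm; exists (INR c * c0), N => n /H.
rewrite !Rabs_right; try exact/Rle_ge/pos_INR.
move=> Hm; apply: (Rle_trans _ (INR c * INR (m n))).
  by rewrite -mult_INR; apply: le_INR; have := Hkm n; lia.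
by rewrite Rmult_assoc; apply: Rmult_le_compat_l; first exact: pos_INR.
Qed.

Lemma bigO_Rbar_real (a : nat -> Rbar) (g : R) :
  bigO_Rbar a g -> bigO (fun n => real (a n)) g.
Proof. by move=> [c [N H]]; exists c, N => n /H; case: (a n). Qed.

Lemma is_lim_seq_Rpower_INR (g : R) :
  g < 0 -> is_lim_seq (fun n => Rpower (INR n) g) 0.
Proof.
move=> Hg.
have Hln : is_lim_seq (fun n => ln (INR n)) p_infty.
  by apply: (is_lim_comp_seq _ _ p_infty p_infty is_lim_ln_p _ is_lim_seq_INR);
     exists 0%nat.
have Hgln : is_lim_seq (fun n => g * ln (INR n)) m_infty.
  have := is_lim_seq_scal_l _ g _ Hln.
  by rewrite /Rbar_mult /= /Rbar_mult'; case: Rle_dec => [/Rle_not_lt []//|].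
by apply: (is_lim_comp_seq _ _ m_infty 0 is_lim_exp_m _ Hgln); exists 0%nat.
Qed.

Lemma bigO_is_lim_seq_0 (a : nat -> R) (g : R) :
  bigO a g -> g < 0 -> is_lim_seq a 0.
Proof.
move=> [c [N H]] Hg; apply/is_lim_seq_abs_0.
apply: (is_lim_seq_le_le_loc (fun _ => 0) _ (fun n => c * Rpower (INR n) g)).
- by exists N => n /leP Hn; split; [apply: Rabs_pos | apply: H].
- exact: is_lim_seq_const.
- by have := is_lim_seq_scal_l _ c _ (is_lim_seq_Rpower_INR g Hg);
     rewrite Rbar_mult_0_r.
Qed.

Lemma is_lim_seq_plus_0 (u v : nat -> R) :
  is_lim_seq u 0 -> is_lim_seq v 0 -> is_lim_seq (fun n => u n + v n) 0.
Proof. by move=> Hu Hv; have := is_lim_seq_plus' _ _ _ _ Hu Hv; rewrite Rplus_0_r. Qed.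

Lemma is_lim_seq_mult_0 (u v : nat -> R) :
  is_lim_seq u 0 -> is_lim_seq v 0 -> is_lim_seq (fun n => u n * v n) 0.
Proof. by move=> Hu Hv; have := is_lim_seq_mult' _ _ _ _ Hu Hv; rewrite Rmult_0_r. Qed.

Lemma is_lim_seq_scal_0 (k : R) (u : nat -> R) :
  is_lim_seq u 0 -> is_lim_seq (fun n => k * u n) 0.
Proof. by move=> Hu; have := is_lim_seq_scal_l _ k _ Hu; rewrite Rbar_mult_0_r. Qed.

Lemma is_lim_seq_bounded_mult_0 (s u : nat -> R) (K : R) :
  (forall n, Rabs (s n) <= K) -> is_lim_seq u 0 ->
  is_lim_seq (fun n => s n * u n) 0.
Proof.
move=> Hs /is_lim_seq_abs_0 Hu; apply/is_lim_seq_abs_0.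
apply: (is_lim_seq_le_le (fun _ => 0) _ (fun n => K * Rabs (u n))).
- move=> n /=; split; first exact: Rabs_pos.
  by rewrite Rabs_mult; apply: Rmult_le_compat_r; [apply: Rabs_pos | apply: Hs].
- exact: is_lim_seq_const.
- exact: is_lim_seq_scal_0.
Qed.

Lemma is_lim_seq_0_eventually_lt (u : nat -> R) (eps : R) :
  0 < eps -> is_lim_seq u 0 ->
  exists N, forall n, (N <= n)%nat -> Rabs (u n) < eps.
Proof.
move=> Heps /is_lim_seq_spec /(_ (mkposreal _ Heps)) [N HN].
by exists N => n /leP /HN; rewrite Rminus_0_r.
Qed.

Lemma Rabs_two_div_sqrt (x : R) : 1 <= x -> Rabs (2 / sqrt x) <= 2.
Proof.
move=> Hx.
have Hs : 1 <= sqrt x by rewrite -sqrt_1; apply: sqrt_le_1_alt.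
have Hi : / sqrt x <= 1 by rewrite -Rinv_1; apply: Rinv_le_contravar; lra.
have Hp : 0 < / sqrt x by apply: Rinv_0_lt_compat; lra.
rewrite Rabs_right /Rdiv; nra.
Qed.

Ltac bigO_product :=
  first [ eassumption | apply: bigO_cst
        | apply: bigO_pow; bigO_product | apply: bigO_mul; bigO_product ].

Ltac is_lim_seq_0_by_bigO :=
  apply: bigO_is_lim_seq_0; [bigO_product | simpl; lra].

(** Common shape of [zeta1]/[zeta2] and [rho1]/[rho2]: [a] stands for [p0 + 1]
    (resp. [M + 1]) and [b] for [9 p0 + 1] (resp. [9 M + 1]). *)
Definition zeta_form (C1 C2 D D2 e a b alpha : R) : R :=
  C1 * a ^ 2 * b * D + 2 * a ^ 2 * b * e + 3 / (1 - alpha) * C2 * a ^ 4 * b ^ 2 * D2.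

Definition rho_form (z C e s : R) : R := z ^ 2 + 2 * (C + e) * z + s * z ^ 2.

Section RhoForm.

Variables (C1 C2 C D D2 e a b : nat -> R) (alpha gC1 gC2 gC gD ge ga : R).
Hypotheses (HC1 : bigO C1 gC1) (HC2 : bigO C2 gC2) (HC : bigO C gC)
  (HD : bigO D (- gD)) (HD2 : bigO D2 (- gD)) (He : bigO e (- ge))
  (Ha : bigO a ga) (Hb : bigO b ga) (Ha1 : forall n, 1 <= a n).
Hypotheses (Hge : 0 < ge)
  (Hz1 : 3 * ga + gC1 < gD) (Hz2 : 3 * ga < ge) (Hz3 : 6 * ga + gC2 < gD)
  (HCz1 : 3 * ga + gC1 + gC < gD) (HCz2 : 3 * ga + gC < ge)
  (HCz3 : 6 * ga + gC2 + gC < gD).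

Let zeta n := zeta_form (C1 n) (C2 n) (D n) (D2 n) (e n) (a n) (b n) alpha.

Lemma zeta_form_is_lim_seq_0 : is_lim_seq zeta 0.
Proof.
by apply: is_lim_seq_plus_0; [apply: is_lim_seq_plus_0|]; is_lim_seq_0_by_bigO.
Qed.

Lemma mul_zeta_form_is_lim_seq_0 : is_lim_seq (fun n => C n * zeta n) 0.
Proof.
apply: (is_lim_seq_ext (fun n =>
  C n * (C1 n * a n ^ 2 * b n * D n) + C n * (2 * a n ^ 2 * b n * e n)
  + C n * (3 / (1 - alpha) * C2 n * a n ^ 4 * b n ^ 2 * D2 n))).
  by move=> n; rewrite /zeta /zeta_form; ring.
by apply: is_lim_seq_plus_0; [apply: is_lim_seq_plus_0|]; is_lim_seq_0_by_bigO.
Qed.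

Lemma rho_form_is_lim_seq_0 :
  is_lim_seq (fun n => rho_form (zeta n) (C n) (e n) (2 / sqrt (a n))) 0.
Proof.
have Hz := zeta_form_is_lim_seq_0.
have He0 : is_lim_seq e 0 by is_lim_seq_0_by_bigO.
apply: (is_lim_seq_ext (fun n => zeta n * zeta n + 2 * (C n * zeta n)
  + 2 * (e n * zeta n) + 2 / sqrt (a n) * (zeta n * zeta n))).
  by move=> n; rewrite /rho_form; ring.
apply: is_lim_seq_plus_0; [apply: is_lim_seq_plus_0; [apply: is_lim_seq_plus_0|]|].
- exact: is_lim_seq_mult_0.
- exact/is_lim_seq_scal_0/mul_zeta_form_is_lim_seq_0.
- exact/is_lim_seq_scal_0/is_lim_seq_mult_0.
- apply: (is_lim_seq_bounded_mult_0 _ _ 2); last exact: is_lim_seq_mult_0.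
  by move=> n; apply: Rabs_two_div_sqrt.
Qed.

End RhoForm.

Theorem theorem3
  (p p0 M : nat -> nat)
  (f : forall n, ('I_(p n) -> R) -> R)
  (X : forall n, 'I_n -> 'I_(p n) -> R)
  (ft : forall n, ('I_(p n) -> R) -> R)
  (eta : nat -> R) (tau : R)
  (g0 g1 g2 g3 g4 g5 g6 g7 g8 g9 : R)
  (Hdims : forall n, (1 <= p0 n)%nat /\ (p0 n <= M n)%nat /\ (p0 n < p n)%nat)
  (Hf : forall n, cont_cube (f n))
  (HX : forall n i k, 0 <= X n i k /\ X n i k < 1)
  (Hft : forall n, cont_cube (ft n) /\ depends_only (A0 (p n) (p0 n)) (ft n))
  (Heta : forall n, 0 < eta n)
  (Htau : 0 < tau)
  (HD2 : bigO (fun n => @Delta_2 n (p n) (X n)) (- g0))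
  (HD3 : bigO (fun n => @Delta_p0_1 n (p n) (p0 n) (X n)) (- g0))
  (HD4 : bigO (fun n => @Delta_p0_M_1 n (p n) (p0 n) (M n) (X n)) (- g0))
  (HD1 : bigO (fun n => @Delta_p0 n (p n) (p0 n) (X n)) (- g0))
  (Heta_O : bigO eta (- g1))
  (HV1 : bigO_Rbar (fun n => @V1n (p n) (p0 n) (f n) (ft n)) g2)
  (HV2 : bigO_Rbar (fun n => @V2n (p n) (p0 n) (M n) (f n) (ft n)) g3)
  (HC1 : bigO_Rbar (fun n => @C1n (p n) (ft n)) g4)
  (HC2 : bigO (fun n => @C2n (p n) (f n)) g5)
  (HC3 : bigO (fun n => @C3n (p n) (p0 n) (f n) (ft n)) g6)
  (HC4 : bigO (fun n => @C4n (p n) (p0 n) (M n) (f n) (ft n)) g7)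
  (Hp0 : bigO (fun n => INR (p0 n)) g8)
  (HM : bigO (fun n => INR (M n)) g9)
  (Hg1 : 0 < g1) (Hg8 : 0 < g8) (Hg9 : 0 < g9)
  (Hc1 : g8 < g9) (Hc2 : 3 * g9 < g0) (Hc3 : g9 < 2 * g1)
  (Hc4 : g7 < g1) (Hc5 : g6 < g1) (Hc6 : g2 < g0) (Hc7 : g3 < g0)
  (Hc8 : 3 * g9 + g4 < g0) (Hc9 : 3 * g9 < g1) (Hc10 : 6 * g9 + g5 < g0)
  (Hc11 : 3 * g8 + g4 + g6 < g0) (Hc12 : 3 * g8 + g6 < g1)
  (Hc13 : 6 * g8 + g5 + g6 < g0) (Hc14 : 3 * g9 + g4 + g7 < g0)
  (Hc15 : 3 * g9 + g7 < g1) (Hc16 : 6 * g9 + g5 + g7 < g0) :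
  exists alpha, 0 < alpha < 1 /\ exists D, 0 < D /\ exists N, forall n, (N <= n)%nat ->
    3 * INR (M n + 1) ^ 2 * INR (9 * M n + 1) * @Delta_2 n (p n) (X n) < alpha /\
    12 * tau ^ 2 - 12 * INR (M n - p0 n + 1) * eta n ^ 2 - 4 * eta n ^ 2
      - 4 * eta n * (@C4n (p n) (p0 n) (M n) (f n) (ft n) + @C3n (p n) (p0 n) (f n) (ft n))
      - @Delta_p0 n (p n) (p0 n) (X n) * real (@V1n (p n) (p0 n) (f n) (ft n))
      - @Delta_p0_M_1 n (p n) (p0 n) (M n) (X n) * real (@V2n (p n) (p0 n) (M n) (f n) (ft n))
      - @rho1 n (p n) (p0 n) (f n) (ft n) (X n) (eta n) alpha
      - @rho2 n (p n) (p0 n) (M n) (f n) (ft n) (X n) (eta n) alpha > D.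
Proof.
have HC1r := bigO_Rbar_real _ _ HC1.
have HV1r := bigO_Rbar_real _ _ HV1.
have HV2r := bigO_Rbar_real _ _ HV2.
have HP1 := bigO_INR_le (fun n => p0 n + 1)%nat _ 2 _ Hp0
  ltac:(move=> n; have := Hdims n; lia).
have HP9 := bigO_INR_le (fun n => 9 * p0 n + 1)%nat _ 10 _ Hp0
  ltac:(move=> n; have := Hdims n; lia).
have HM1 := bigO_INR_le (fun n => M n + 1)%nat _ 2 _ HM
  ltac:(move=> n; have := Hdims n; lia).
have HM9 := bigO_INR_le (fun n => 9 * M n + 1)%nat _ 10 _ HM
  ltac:(move=> n; have := Hdims n; lia).
have HMp := bigO_INR_le (fun n => M n - p0 n + 1)%nat _ 1 _ HM
  ltac:(move=> n; have := Hdims n; lia).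
have Hdim1 n : 1 <= INR (p0 n + 1) by apply: (le_INR 1); lia.
have HdimM n : 1 <= INR (M n + 1) by apply: (le_INR 1); lia.
have Hrho1 : is_lim_seq (fun n => @rho1 n (p n) (p0 n) (f n) (ft n) (X n) (eta n) (1/2)) 0.
  by apply: (rho_form_is_lim_seq_0 _ _ _ _ _ _ _ _ (1/2) _ _ _ g0 g1 g8
    HC1r HC2 HC3 HD1 HD2 Heta_O HP1 HP9 Hdim1); lra.
have Hrho2 : is_lim_seq (fun n => @rho2 n (p n) (p0 n) (M n) (f n) (ft n) (X n) (eta n) (1/2)) 0.
  by apply: (rho_form_is_lim_seq_0 _ _ _ _ _ _ _ _ (1/2) _ _ _ g0 g1 g9
    HC1r HC2 HC4 HD3 HD2 Heta_O HM1 HM9 HdimM); lra.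
have Hi : is_lim_seq (fun n =>
    3 * INR (M n + 1) ^ 2 * INR (9 * M n + 1) * @Delta_2 n (p n) (X n)) 0.
  by is_lim_seq_0_by_bigO.
have Heta_C : is_lim_seq (fun n =>
    4 * eta n * (@C4n (p n) (p0 n) (M n) (f n) (ft n) + @C3n (p n) (p0 n) (f n) (ft n))) 0.
  apply: (is_lim_seq_ext (fun n => 4 * eta n * @C4n (p n) (p0 n) (M n) (f n) (ft n)
    + 4 * eta n * @C3n (p n) (p0 n) (f n) (ft n))); first by move=> n; ring.
  by apply: is_lim_seq_plus_0; is_lim_seq_0_by_bigO.
have Hii : is_lim_seq (fun n =>
    12 * INR (M n - p0 n + 1) * eta n ^ 2 + 4 * eta n ^ 2
    + 4 * eta n * (@C4n (p n) (p0 n) (M n) (f n) (ft n) + @C3n (p n) (p0 n) (f n) (ft n))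
    + @Delta_p0 n (p n) (p0 n) (X n) * real (@V1n (p n) (p0 n) (f n) (ft n))
    + @Delta_p0_M_1 n (p n) (p0 n) (M n) (X n) * real (@V2n (p n) (p0 n) (M n) (f n) (ft n))
    + @rho1 n (p n) (p0 n) (f n) (ft n) (X n) (eta n) (1/2)
    + @rho2 n (p n) (p0 n) (M n) (f n) (ft n) (X n) (eta n) (1/2)) 0.
  do 5 (apply: is_lim_seq_plus_0; last by [|is_lim_seq_0_by_bigO]).
  by apply: is_lim_seq_plus_0; is_lim_seq_0_by_bigO.
exists (1/2); split; first lra.
exists (6 * tau ^ 2); split; first nra.
have [N1 HN1] := is_lim_seq_0_eventually_lt _ (1/2) ltac:(lra) Hi.
have [N2 HN2] := is_lim_seq_0_eventually_lt _ (6 * tau ^ 2) ltac:(nra) Hii.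
exists (maxn N1 N2) => n Hn.
have /Rabs_def2 := HN1 n ltac:(lia); have /Rabs_def2 := HN2 n ltac:(lia).
lra.
Qed.
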